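(* Let $n=n(\theta)$ be positive integers with $n\to\infty$ and $\theta/n\to c\in(0,\infty)$ as $\theta\to\infty$. Let $K_n(\theta)$ be a random variable with $P\{K_n(\theta)=k\}=|S_n^k|\theta^k/\theta_{(n)}$, $k=1,\dots,n$, where $\theta_{(n)}=\theta(\theta+1)\cdots(\theta+n-1)$ and $|S_n^k|$ is the coefficient of $\theta^k$ in $\theta_{(n)}$. Then, as $\theta\to\infty$, the family of laws of $K_n(\theta)/n$ satisfies an LDP on $[0,1]$ with speed $\theta$ and rate function $$I(x)=\sup_{t\in\mathbb R}\{tx-\Lambda_3(t)\},$$ where $\Lambda_3(t)=\frac1c\{[c\log c-(1+c)\log(1+c)]+[(1+ce^{ct})\log(1+ce^{ct})-ce^{ct}\log(ce^{ct})]\}$.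
   Context: $K_n(\theta)$ is the number of distinct alleles in a sample of size $n$ from a $PD(\theta)$ population. An LDP with speed $\theta$ uses normalization $\theta^{-1}\log$ as $\theta\to\infty$. *)

From HB Require Import structures.
From mathcomp Require Import all_boot all_order all_algebra.
From mathcomp Require Import all_classical all_reals.
From mathcomp Require Import ereal topology normedtype sequences exp measure lebesgue_measure.
Set Implicit Arguments. Unset Strict Implicit. Unset Printing Implicit Defensive.
Import Order.TTheory GRing.Theory Num.Theory.
Import numFieldNormedType.Exports.
Local Open Scope classical_set_scope.
Local Open Scope ring_scope.

Section Defs.
Variable R : realType.

Definition unit01 : set R := `[(0:R), 1]%classic.

Definition rising (theta : R) (n : nat) : R := \prod_(i < n) (theta + i%:R).

Definition stirling1 (n k : nat) : R :=
  (\prod_(i < n) ('X + (i%:R)%:P) : {poly R})`_k.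

Definition Kn_law (theta : R) (n : nat) (A : set R) : R :=
  \sum_(1 <= k < n.+1)
     (if `[< A (k%:R / n%:R) >] then stirling1 n k * theta ^+ k / rising theta n
      else 0).

Definition scaled_log (theta p : R) : \bar R :=
  if p == 0 then -oo%E else (theta^-1 * ln p)%:E.

Definition rel_interior01 (A : set R) : set R :=
  [set x | A x /\ exists2 e : R, 0 < e &
             forall y, unit01 y -> `|y - x| < e -> A y].

(* Closure relative to the closed set [0,1]
   coincides with the closure in R. *)
Definition LDP01 (mu : R -> set R -> R) (I : R -> \bar R) : Prop :=
  [/\ (forall x, unit01 x -> (0 <= I x)%E),
      (forall a : R, closed [set x | unit01 x /\ (I x <= a%:E)%E]),
      (forall F : set R, measurable F -> F `<=` unit01 ->
         (limf_esup (fun theta => scaled_log theta (mu theta F)) (pinfty_nbhs R)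
           <= - ereal_inf (I @` closure F))%E)
    & (forall G : set R, measurable G -> G `<=` unit01 ->
         (- ereal_inf (I @` rel_interior01 G)
           <= limf_einf (fun theta => scaled_log theta (mu theta G)) (pinfty_nbhs R))%E)].

Definition Lambda3 (c t : R) : R :=
  c^-1 * ((c * ln c - (1 + c) * ln (1 + c))
          + ((1 + c * expR (c * t)) * ln (1 + c * expR (c * t))
             - c * expR (c * t) * ln (c * expR (c * t)))).

Definition rate3 (c x : R) : \bar R :=
  ereal_sup [set (t * x - Lambda3 c t)%:E | t in [set: R]].

End Defs.

From HB Require Import structures.
From mathcomp Require Import all_boot all_order all_algebra.
From mathcomp Require Import all_classical all_reals.
From mathcomp Require Import ereal topology normedtype sequences exp measure lebesgue_measure.
From mathcomp Require Import ring lra.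
Import Order.TTheory GRing.Theory Num.Theory.
Import numFieldNormedType.Exports.
Local Open Scope classical_set_scope.
Local Open Scope ring_scope.
Set Implicit Arguments. Unset Strict Implicit. Unset Printing Implicit Defensive.

(* The generating function of [K_n(theta)] is [E s^K = rising (theta s) n / rising theta n], so
   its scaled cumulant generating function at [s = e^(t theta / n)] is a ratio of rising
   factorials. Comparing [ln (rising a n)] with [F (a + n) - F a], [F x = x ln x - x], shows that
   it converges to [Lambda3 c t]. The upper bound is Chernoff's bound on a finite cover of the
   compact closure of the set. For the lower bound, tilting by [e^(s K)] gives the law of
   [K_n(theta e^s)], under which [K_n / n] concentrates (by Chernoff's bound again) around its
   mean; the limits [mean_fun (c e^(c t))] of these means fill [(0, 1)]. *)

Section StirlingNumbers.
Variable R : realType.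
Implicit Types (a x : R) (n k : nat).

Definition rising_poly n : {poly R} := \prod_(i < n) ('X + (i%:R)%:P).

Lemma rising_polyS n : rising_poly n.+1 = rising_poly n * ('X + (n%:R)%:P).
Proof. by rewrite /rising_poly big_ord_recr. Qed.

Lemma stirling1_ge0 n k : 0 <= stirling1 R n k.
Proof.
rewrite /stirling1 -/(rising_poly n).
elim: n k => [|n IHn] k; first by rewrite /rising_poly big_ord0 coef1; case: (k == 0%N).
rewrite rising_polyS mulrDr coefD coefMX coefMC.
by apply: addr_ge0; [case: k => [|k] //=; apply: IHn | apply: mulr_ge0].
Qed.

Lemma stirling1_n0 n : (0 < n)%N -> stirling1 R n 0 = 0.
Proof.
rewrite /stirling1 -/(rising_poly n); case: n => // n _; elim: n => [|n IHn].
  by rewrite rising_polyS /rising_poly big_ord0 mul1r coefD coefX coefC /= add0r.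
by rewrite rising_polyS mulrDr coefD coefMX coefMC IHn mul0r addr0.
Qed.

Lemma size_rising_poly n : (size (rising_poly n) <= n.+1)%N.
Proof.
elim: n => [|n IHn]; first by rewrite /rising_poly big_ord0 size_poly1.
rewrite rising_polyS; apply: leq_trans (size_polyMleq _ _) _.
have size_lin : (size (('X + (n%:R)%:P)%R : {poly R}) <= 2)%N.
  apply: leq_trans (size_polyD _ _) _.
  by rewrite size_polyX geq_max leqnn (leq_trans (size_polyC_leq1 _)).
rewrite -subn1; apply: leq_trans (leq_sub2r 1 (leq_add IHn size_lin)) _.
by rewrite addnS addn1 subn1.
Qed.

Lemma rising_stirling1 n x : \sum_(k < n.+1) stirling1 R n k * x ^+ k = rising x n.
Proof.
rewrite /stirling1 -/(rising_poly n) -horner_coef_wide ?size_rising_poly //.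
rewrite horner_prod /rising; apply: eq_bigr => i _.
by rewrite hornerD hornerX hornerC.
Qed.

Lemma rising_gt0 a n : 0 < a -> 0 < rising a n.
Proof. by move=> a0; apply: prodr_gt0 => i _; apply: ltr_wpDr. Qed.

Lemma rising_nat a n : rising a n = \prod_(0 <= i < n) (a + i%:R).
Proof. by rewrite /rising big_mkord. Qed.

Lemma ln_rising a n : 0 < a -> ln (rising a n) = \sum_(0 <= i < n) ln (a + i%:R).
Proof.
move=> a0; rewrite rising_nat.
elim: n => [|n IHn]; first by rewrite !big_geq // ln1.
have pos_prod : 0 < \prod_(0 <= i < n) (a + i%:R).
  by rewrite -rising_nat; exact: rising_gt0.
by rewrite !big_nat_recr //= lnM ?posrE ?IHn // ltr_wpDr.
Qed.

Lemma stirling1_term_ge0 a n k : 0 <= a -> 0 <= stirling1 R n k * a ^+ k.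
Proof. by move=> a0; rewrite mulr_ge0 ?stirling1_ge0 ?exprn_ge0. Qed.

End StirlingNumbers.

Section RisingFactorialBounds.
Variable R : realType.
Implicit Types (a x : R) (n : nat).

Lemma lnD1B_le_inv x : 0 < x -> ln (x + 1) - ln x <= x^-1.
Proof.
move=> x0; rewrite -ln_div ?posrE ?ltr_wpDr //.
rewrite mulrDl divff ?gt_eqF // mul1r; apply: le_ln1Dx.
have : 0 < x^-1 by rewrite invr_gt0.
lra.
Qed.

Lemma inv_le_lnD1B x : 0 < x -> (x + 1)^-1 <= ln (x + 1) - ln x.
Proof.
move=> x0; have x10 : 0 < x + 1 by rewrite addr_gt0.
rewrite -opprB lerNr -ln_div ?posrE //.
have -> : x / (x + 1) = 1 + (- (x + 1)^-1) by field; rewrite gt_eqF.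
by apply: le_ln1Dx; rewrite ltrN2 invf_lt1 //; lra.
Qed.

(* The leading term of Stirling's formula for [ln Gamma x]. *)
Definition lgamma_main x : R := x * ln x - x.

Lemma lgamma_mainS_le x : 0 < x -> lgamma_main (x + 1) - lgamma_main x <= ln (x + 1).
Proof.
move=> x0; have := ler_wpM2l (ltW x0) (lnD1B_le_inv x0).
rewrite /lgamma_main divff ?gt_eqF //; lra.
Qed.

Lemma lgamma_mainS_ge x : 0 < x -> ln x <= lgamma_main (x + 1) - lgamma_main x.
Proof.
move=> x0; have x10 : 0 < x + 1 by rewrite addr_gt0.
have := ler_wpM2l (ltW x10) (inv_le_lnD1B x0).
rewrite /lgamma_main divff ?gt_eqF //; lra.
Qed.

Lemma ln_rising_bounds a n : 0 < a ->
  0 <= lgamma_main (a + n%:R) - lgamma_main a - ln (rising a n) <= ln (a + n%:R) - ln a.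
Proof.
move=> a0; rewrite ln_rising //.
have pos i : 0 < a + i%:R by exact: ltr_wpDr.
have telF : lgamma_main (a + n%:R) - lgamma_main a =
    \sum_(0 <= i < n) (lgamma_main (a + i.+1%:R) - lgamma_main (a + i%:R)).
  by rewrite (telescope_sumr (fun i => lgamma_main (a + i%:R))) // addr0.
have telL : ln (a + n%:R) - ln a = \sum_(0 <= i < n) (ln (a + i.+1%:R) - ln (a + i%:R)).
  by rewrite (telescope_sumr (fun i => ln (a + i%:R))) // addr0.
rewrite telF telL -sumrB.
apply/andP; split.
  apply: sumr_ge0 => i _; rewrite subr_ge0 -natr1 addrA; exact: lgamma_mainS_ge.
rewrite -subr_ge0 -sumrB; apply: sumr_ge0 => i _.
by have := lgamma_mainS_le (pos i); rewrite -natr1 addrA; lra.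
Qed.

(* [rising_mean a n] is the mean of the law [k |-> stirling1 n k a^k / rising a n],
   the derivative at [s = 0] of [ln (rising (a e^s) n)]. *)
Definition rising_mean a n : R := \sum_(0 <= i < n) a / (a + i%:R).

Lemma rising_mean_ge0 a n : 0 < a -> 0 <= rising_mean a n.
Proof. by move=> a0; apply: sumr_ge0 => i _; rewrite divr_ge0 ?ltW ?ltr_wpDr. Qed.

Lemma rising_mean_le a n : 0 < a -> rising_mean a n <= n%:R.
Proof.
move=> a0; rewrite /rising_mean -[n in X in _ <= X]subn0 -sumr_const_nat.
by apply: ler_sum_nat => i _; rewrite ler_pdivrMr ?mul1r ?lerDl ?ltr_wpDr.
Qed.

Lemma rising_mean_bounds a n : 0 < a ->
  a * (ln (a + n%:R) - ln a) <= rising_mean a n <= a * (ln (a + n%:R) - ln a) + 1.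
Proof.
move=> a0; have pos i : 0 < a + i%:R by exact: ltr_wpDr.
have tel_inv : \sum_(0 <= i < n) (a / (a + i%:R) - a / (a + i.+1%:R)) = 1 - a / (a + n%:R).
  rewrite (telescope_sumr_eq (fun i => - (a / (a + i%:R)))) //; last first.
    by move=> k _; rewrite opprK addrC.
  by rewrite addr0 divff ?gt_eqF //; ring.
have tel_inv_le1 : 1 - a / (a + n%:R) <= 1 by rewrite lerBlDr lerDl divr_ge0 ?ltW.
have telL : ln (a + n%:R) - ln a = \sum_(0 <= i < n) (ln (a + i.+1%:R) - ln (a + i%:R)).
  by rewrite (telescope_sumr (fun i => ln (a + i%:R))) // addr0.
rewrite telL mulr_sumr /rising_mean.
apply/andP; split.
  apply: ler_sum_nat => i _; rewrite -natr1 addrA.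
  by apply: ler_wpM2l; [exact: ltW | exact: lnD1B_le_inv].
apply: le_trans (lerD (lexx _) tel_inv_le1); rewrite -tel_inv -big_split /=.
apply: ler_sum_nat => i _; rewrite -natr1 !addrA.
by have := ler_wpM2l (ltW a0) (inv_le_lnD1B (pos i)); lra.
Qed.

End RisingFactorialBounds.

Section Concentration.
Variable R : realType.
Implicit Types (a r : R) (n : nat).

Lemma expR_sub1_le r : `|r| <= 1/2 -> expR r - 1 - r <= 2 * r ^+ 2.
Proof.
rewrite ler_norml => /andP[r_ge r_le].
have e0 : 0 < expR r := expR_gt0 r.
have : expR r * (1 - r) <= expR r * expR (- r) by rewrite ler_pM2l //; have := expR_ge1Dx (- r); lra.
rewrite expRxMexpNx_1 => er.
have : 1 <= (1 + r + 2 * r ^+ 2) * (1 - r).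
  have : 0 <= r ^+ 2 * (1 - 2 * r) by rewrite mulr_ge0 ?sqr_ge0 //; lra.
  nra.
have r1 : 0 < 1 - r by lra.
move=> h; have : expR r * (1 - r) <= (1 + r + 2 * r ^+ 2) * (1 - r) by lra.
rewrite ler_pM2r //; lra.
Qed.

Lemma rising_expR_le n a r : 0 < a ->
  rising (a * expR r) n <= rising a n * expR ((expR r - 1) * rising_mean a n).
Proof.
move=> a0; rewrite !rising_nat /rising_mean mulr_sumr expR_sum -big_split /=.
apply: ler_prod => i _; apply/andP; split.
  by rewrite addr_ge0 // mulr_ge0 ?expR_ge0 // ltW.
have pos : 0 < a + i%:R by exact: ltr_wpDr.
apply: le_trans (_ : (a + i%:R) * (1 + (expR r - 1) * (a / (a + i%:R))) <= _).
  by rewrite le_eqVlt; apply/orP; left; apply/eqP; field; rewrite gt_eqF.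
by apply: ler_wpM2l; [exact: ltW | exact: expR_ge1Dx].
Qed.

Lemma chernoff n a r z (P : pred 'I_n.+1) : 0 < a ->
  (forall k : 'I_n.+1, P k -> r * z <= r * k%:R) ->
  \sum_(k < n.+1 | P k) stirling1 R n k * a ^+ k <= expR (- (r * z)) * rising (a * expR r) n.
Proof.
move=> a0 hP; rewrite -rising_stirling1 mulr_sumr.
apply: le_trans (_ : \sum_(k < n.+1 | P k) expR (- (r * z)) *
   (stirling1 R n k * (a * expR r) ^+ k) <= _); last first.
  rewrite [X in _ <= X](bigID P) /= lerDl.
  apply: sumr_ge0 => k _; rewrite mulr_ge0 ?expR_ge0 // stirling1_term_ge0 //.
  by rewrite mulr_ge0 ?expR_ge0 // ltW.
apply: ler_sum => k Pk.
rewrite exprMn -expRM_natl mulrCA; apply: ler_wpM2l; first exact: stirling1_ge0.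
rewrite mulrCA -expRD -[X in X <= _]mulr1; apply: ler_wpM2l; first by rewrite exprn_ge0 ?ltW.
by have := hP k Pk; rewrite -[1]expR0 ler_expR mulrC; lra.
Qed.

Lemma chernoff_quad n a r (P : pred 'I_n.+1) : 0 < a -> `|r| <= 1/2 ->
  (forall k : 'I_n.+1, P k -> r * rising_mean a n + 4 * r ^+ 2 * n%:R <= r * k%:R) ->
  \sum_(k < n.+1 | P k) stirling1 R n k * a ^+ k <= rising a n * expR (- (2 * r ^+ 2 * n%:R)).
Proof.
move=> a0 r_small hP; set S := rising_mean a n.
apply: le_trans (chernoff (r := r) (z := S + 4 * r * n%:R) a0 _) _.
  by move=> k /hP; rewrite (_ : r * (S + 4 * r * n%:R) = r * S + 4 * r ^+ 2 * n%:R) //; ring.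
apply: le_trans (ler_wpM2l (expR_ge0 _) (rising_expR_le n r a0)) _.
rewrite mulrCA -expRD; apply: ler_wpM2l; first exact: ltW (rising_gt0 _ a0).
rewrite ler_expR.
have quad : (expR r - 1 - r) * S <= 2 * r ^+ 2 * n%:R.
  apply: le_trans (_ : 2 * r ^+ 2 * S <= _).
    by apply: ler_wpM2r; [exact: rising_mean_ge0 | exact: expR_sub1_le].
  by apply: ler_wpM2l; [rewrite mulr_ge0 ?sqr_ge0 | exact: rising_mean_le].
rewrite -/S (_ : - (r * (S + 4 * r * n%:R)) + (expR r - 1) * S =
  (expR r - 1 - r) * S - 2 * (2 * r ^+ 2 * n%:R)); first lra.
by ring.
Qed.

Lemma tail_bound n a d : (0 < n)%N -> 0 < a -> 0 < d <= 1 ->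
  \sum_(k < n.+1 | d <= `|k%:R / n%:R - rising_mean a n / n%:R|) stirling1 R n k * a ^+ k
    <= 2 * rising a n * expR (- (n%:R * d ^+ 2 / 8)).
Proof.
move=> n0 a0 /andP[d0 d1].
have np : 0 < (n%:R : R) by rewrite ltr0n.
set S := rising_mean a n.
have exponent r : r ^+ 2 = d ^+ 2 / 16 -> - (2 * r ^+ 2 * n%:R) = - (n%:R * d ^+ 2 / 8).
  by move=> ->; field.
rewrite (bigID (fun k : 'I_n.+1 => 0 <= k%:R / n%:R - S / n%:R)) /=.
rewrite -mulrA mulr_natl mulr2n; apply: lerD.
- rewrite -(exponent (d / 4)); last by field.
  apply: chernoff_quad => //; first by rewrite ger0_norm; lra.
  move=> k /andP[]; rewrite -mulrBl => far /ger0_norm normE; rewrite normE in far.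
  have : d * n%:R <= k%:R - S by rewrite -ler_pdivlMr.
  rewrite -subr_ge0 => /(mulr_ge0 (ltW d0)) h; rewrite -/S -subr_ge0.
  have -> : d / 4 * k%:R - (d / 4 * S + 4 * (d / 4) ^+ 2 * n%:R) = d / 4 * (k%:R - S - d * n%:R) by field.
  by rewrite mulr_ge0 //; [lra | rewrite -(pmulr_rge0 _ d0)].
- rewrite -(exponent (- (d / 4))); last by rewrite sqrrN; field.
  apply: chernoff_quad => //; first by rewrite normrN ger0_norm; lra.
  move=> k /andP[]; rewrite -mulrBl -ltNge => far /ltr0_norm normE; rewrite normE in far.
  have : d * n%:R <= - (k%:R - S) by rewrite -ler_pdivlMr // mulNr.
  rewrite -subr_ge0 => /(mulr_ge0 (ltW d0)) h; rewrite -/S -subr_ge0.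
  have -> : - (d / 4) * k%:R - (- (d / 4) * S + 4 * (- (d / 4)) ^+ 2 * n%:R) =
    d / 4 * (- (k%:R - S) - d * n%:R) by field.
  by rewrite mulr_ge0 //; [lra | rewrite -(pmulr_rge0 _ d0)].
Qed.

End Concentration.

Section LimitForms.
Variable R : realType.
Implicit Types (th u v w : R).

Definition lambda_uv u v : R :=
  (u + v) * ln (u + v) - u * ln u - (1 + v) * ln (1 + v).

Lemma Lambda3E c t : 0 < c -> Lambda3 c t = lambda_uv (expR (t * c)) c^-1.
Proof.
move=> c0; rewrite /lambda_uv /Lambda3 (mulrC t c).
set E := expR (c * t); have E0 : 0 < E := expR_gt0 _.
have ci : 0 < c^-1 by rewrite invr_gt0.
have -> : E + c^-1 = c^-1 * (1 + c * E) by field; rewrite gt_eqF.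
have -> : 1 + c^-1 = c^-1 * (1 + c) by field; rewrite gt_eqF.
have -> : ln E = ln (c * E) - ln c by rewrite lnM ?posrE //; ring.
rewrite !lnM ?posrE ?addr_gt0 ?mulr_gt0 // lnV ?posrE //.
by field; rewrite gt_eqF.
Qed.

Lemma lgamma_main_scale th u : 0 < th -> 0 < u ->
  lgamma_main (th * u) = th * (u * ln u) + th * u * ln th - th * u.
Proof. by move=> th0 u0; rewrite /lgamma_main lnM ?posrE //; ring. Qed.

Lemma lgamma_main_lambda_uv th u v : 0 < th -> 0 < u -> 0 < v ->
  lgamma_main (th * u + th * v) - lgamma_main (th * u)
    - (lgamma_main (th + th * v) - lgamma_main th) = th * lambda_uv u v.
Proof.
move=> th0 u0 v0.
have -> : th + th * v = th * (1 + v) by ring.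
have -> : lgamma_main th = lgamma_main (th * 1) by rewrite mulr1.
by rewrite -mulrDr !lgamma_main_scale ?addr_gt0 // /lambda_uv ln1; ring.
Qed.

Lemma ln_rising_ratio_bounds th u v N : 0 < th -> 0 < u -> 0 < v -> N%:R = th * v ->
  lambda_uv u v - th^-1 * (ln (u + v) - ln u)
    <= th^-1 * ln (rising (th * u) N / rising th N)
    <= lambda_uv u v + th^-1 * ln (1 + v).
Proof.
move=> th0 u0 v0 Nv.
have thu0 : 0 < th * u by rewrite mulr_gt0.
have := ln_rising_bounds N thu0; have := ln_rising_bounds N th0.
rewrite Nv => /andP[plain_lb plain_ub] /andP[tilted_lb tilted_ub].
have ln_tilted : ln (th * u + th * v) - ln (th * u) = ln (u + v) - ln u.
  by rewrite -mulrDr !lnM ?posrE ?addr_gt0 //; ring.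
have ln_plain : ln (th + th * v) - ln th = ln (1 + v).
  by rewrite -[X in ln (X + _)]mulr1 -mulrDr !lnM ?posrE ?addr_gt0 //; ring.
have lam := lgamma_main_lambda_uv th0 u0 v0.
have /andP[lo hi] : th * lambda_uv u v - (ln (u + v) - ln u)
    <= ln (rising (th * u) N) - ln (rising th N) <= th * lambda_uv u v + ln (1 + v).
  by rewrite -lam; apply/andP; split; lra.
have thV0 : 0 <= th^-1 by rewrite invr_ge0 ltW.
have thK : th^-1 * (th * lambda_uv u v) = lambda_uv u v by rewrite mulKf ?gt_eqF.
rewrite ln_div ?posrE ?rising_gt0 //; apply/andP; split.
  by have := ler_wpM2l thV0 lo; rewrite mulrBr; lra.
by have := ler_wpM2l thV0 hi; rewrite mulrDr; lra.
Qed.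

(* The limit of [rising_mean a n / n] as [a / n -> w]; [mean_fun (c e^(c t))] is the
   derivative of [Lambda3 c t]. *)
Definition mean_fun w : R := w * (ln (w + 1) - ln w).

Lemma rising_mean_div_bounds a N : 0 < a -> (0 < N)%N ->
  mean_fun (a / N%:R) <= rising_mean a N / N%:R <= mean_fun (a / N%:R) + N%:R^-1.
Proof.
move=> a0 N0; have Np : 0 < (N%:R : R) by rewrite ltr0n.
have -> : mean_fun (a / N%:R) = a * (ln (a + N%:R) - ln a) / N%:R.
  rewrite /mean_fun (_ : a / N%:R + 1 = (a + N%:R) / N%:R); last by field; rewrite gt_eqF.
  by rewrite !ln_div ?posrE ?addr_gt0 //; field; rewrite gt_eqF.
have NV0 : 0 <= N%:R^-1 :> R by rewrite invr_ge0 ltW.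
have /andP[lo hi] := rising_mean_bounds N a0.
apply/andP; split; first exact: ler_wpM2r.
by rewrite -[X in _ + X]mul1r -mulrDl; apply: ler_wpM2r.
Qed.

Lemma mean_fun_bounds w : 0 < w -> w / (w + 1) <= mean_fun w <= 1.
Proof.
move=> w0; apply/andP; split; first by apply: ler_wpM2l; [exact: ltW | exact: inv_le_lnD1B].
by have := ler_wpM2l (ltW w0) (lnD1B_le_inv w0); rewrite divff ?gt_eqF.
Qed.

Lemma mean_fun_gt0 w : 0 < w -> 0 < mean_fun w.
Proof.
move=> w0; have /andP[lb _] := mean_fun_bounds w0.
by apply: lt_le_trans lb; rewrite divr_gt0 // addr_gt0.
Qed.

Lemma mean_fun_expRN_le m : 0 < m -> mean_fun (expR (- m)) <= 4 / m.
Proof.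
move=> m0; rewrite /mean_fun expRK; set w := expR (- m).
have w0 : 0 < w := expR_gt0 _.
have lnw1 : ln (w + 1) <= w by rewrite addrC le_ln1Dx //; lra.
have w1 : w <= 1 by rewrite /w expR_le1; lra.
have em : 0 < expR m := expR_gt0 m.
have quad : 1 + m ^+ 2 / 2 <= expR m by exact: (expR_ge1Dxn 1 (ltW m0)).
have wem : w * expR m = 1 by rewrite /w mulrC expRxMexpNx_1.
have : w * (ln (w + 1) - - m) <= w * (1 + m) by apply: ler_wpM2l; [exact: ltW | lra].
move=> /le_trans; apply; rewrite ler_pdivlMr //.
have poly_le : (1 + m) * m <= 4 * expR m.
  have sq : (m - 1) ^+ 2 = m ^+ 2 - 2 * m + 1 by ring.
  have : (1 + m) * m = m + m ^+ 2 by ring.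
  have := sqr_ge0 (m - 1); lra.
have := ler_wpM2l (ltW w0) poly_le.
have -> : w * (4 * expR m) = 4 by rewrite mulrCA wem mulr1.
by rewrite mulrA.
Qed.

Lemma mean_fun_continuous w : 0 < w -> {for w, continuous mean_fun}.
Proof.
move=> w0; apply: cvgM; first exact: cvg_id.
apply: cvgB; last exact: continuous_ln.
apply: continuous_cvg; first exact: continuous_ln (addr_gt0 w0 ltr01).
by apply: cvgD; [exact: cvg_id | exact: cvg_cst].
Qed.

End LimitForms.

Lemma cvg_ln (R : realType) (T : Type) (F : set_system T) (FF : Filter F) (f : T -> R) (l : R) :
  0 < l -> f x @[x --> F] --> l -> ln (f x) @[x --> F] --> ln l.
Proof. by move=> l0; apply: (continuous_cvg _ (continuous_ln l0)). Qed.

Lemma invr_cvg0_pinfty (R : realType) : (x : R)^-1 @[x --> +oo] --> 0.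
Proof.
apply/(@gtr0_cvgV0 R R (pinfty_nbhs R) _ id); last exact: cvg_id.
by near=> x; near: x; exact: nbhs_pinfty_gt.
Unshelve. all: end_near.
Qed.

Section Asymptotics.
Variables (R : realType) (c : R) (n : R -> nat).
Hypothesis c0 : 0 < c.
Hypothesis n0 : forall theta, (0 < n theta)%N.
Hypothesis n_cvg : ((n theta)%:R : R) @[theta --> +oo] --> +oo.
Hypothesis ratio_cvg : theta / (n theta)%:R @[theta --> +oo] --> c.

(* [tilt t th = e^s] with [s = t th / n]: tilting the law of [K_n(th)] by [e^(s K)]
   turns it into the law of [K_n(th e^s)]. *)
Definition tilt t th : R := expR (t * (th / (n th)%:R)).

(* [(1/th) ln E[exp (t th K_n(th) / n)]] *)
Definition scaled_cgf t th : R :=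
  th^-1 * ln (rising (th * tilt t th) (n th) / rising th (n th)).

Definition tilted_mean t th : R := rising_mean (th * tilt t th) (n th) / (n th)%:R.

Lemma tilt_gt0 t th : 0 < tilt t th.
Proof. exact: expR_gt0. Qed.

Lemma tilt_cvg t : tilt t th @[th --> +oo] --> expR (t * c).
Proof.
apply: (continuous_cvg _ (@continuous_expR R _)).
by apply: cvgM; [exact: cvg_cst | exact: ratio_cvg].
Qed.

Lemma inv_ratio_cvg : (n th)%:R / th @[th --> +oo] --> c^-1.
Proof.
under eq_fun do rewrite -invf_div.
by apply: cvgV => //; rewrite gt_eqF.
Qed.

Lemma lambda_uv_cvg t :
  lambda_uv (tilt t th) ((n th)%:R / th) @[th --> +oo] --> lambda_uv (expR (t * c)) c^-1.
Proof.
have e0 : 0 < expR (t * c) := expR_gt0 _.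
have ci : 0 < c^-1 by rewrite invr_gt0.
have := @tilt_cvg t; have := inv_ratio_cvg => hv hu.
apply: cvgB; first apply: cvgB.
- apply: cvgM; first exact: cvgD.
  by apply: cvg_ln; [rewrite addr_gt0 | exact: cvgD].
- by apply: cvgM => //; apply: cvg_ln.
- apply: cvgM; first by apply: cvgD => //; exact: cvg_cst.
  by apply: cvg_ln; [rewrite addr_gt0 | apply: cvgD => //; exact: cvg_cst].
Qed.

Lemma scaled_cgf_cvg t : scaled_cgf t th @[th --> +oo] --> Lambda3 c t.
Proof.
have e0 : 0 < expR (t * c) := expR_gt0 _.
have ci : 0 < c^-1 by rewrite invr_gt0.
have := @tilt_cvg t; have := inv_ratio_cvg => hv hu.
rewrite Lambda3E //.
apply: (@squeeze_cvgr _ _ _ _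
  (fun th => lambda_uv (tilt t th) ((n th)%:R / th)
     - th^-1 * (ln (tilt t th + (n th)%:R / th) - ln (tilt t th)))
  (fun th => lambda_uv (tilt t th) ((n th)%:R / th) + th^-1 * ln (1 + (n th)%:R / th))).
- near=> th; have th0 : 0 < th by near: th; exact: nbhs_pinfty_gt.
  apply: ln_rising_ratio_bounds; rewrite ?tilt_gt0 ?divr_gt0 ?ltr0n //.
  by rewrite mulrC divfK ?gt_eqF.
- rewrite -[X in _ --> X]subr0 -(mul0r (ln (expR (t * c) + c^-1) - ln (expR (t * c)))).
  apply: cvgB; first exact: lambda_uv_cvg.
  apply: cvgM; first exact: invr_cvg0_pinfty.
  by apply: cvgB; [apply: cvg_ln; [rewrite addr_gt0 | exact: cvgD] | exact: cvg_ln].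
- rewrite -[X in _ --> X]addr0 -(mul0r (ln (1 + c^-1))).
  apply: cvgD; first exact: lambda_uv_cvg.
  apply: cvgM; first exact: invr_cvg0_pinfty.
  by apply: cvg_ln; [rewrite addr_gt0 | apply: cvgD => //; exact: cvg_cst].
Unshelve. all: end_near.
Qed.

Lemma tilted_mean_cvg t :
  tilted_mean t th @[th --> +oo] --> mean_fun (c * expR (t * c)).
Proof.
have w0 : 0 < c * expR (t * c) by rewrite mulr_gt0 ?expR_gt0.
have ratio_tilt_cvg : mean_fun (th / (n th)%:R * tilt t th) @[th --> +oo]
    --> mean_fun (c * expR (t * c)).
  apply: (continuous_cvg _ (mean_fun_continuous w0)).
  by apply: cvgM; [exact: ratio_cvg | exact: tilt_cvg].
apply: (@squeeze_cvgr _ _ _ _ (fun th => mean_fun (th / (n th)%:R * tilt t th))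
   (fun th => mean_fun (th / (n th)%:R * tilt t th) + (n th)%:R^-1)) => //.
- near=> th; have th0 : 0 < th by near: th; exact: nbhs_pinfty_gt.
  rewrite mulrAC; apply: rising_mean_div_bounds => //.
  by rewrite mulr_gt0 ?tilt_gt0.
- rewrite -[X in _ --> X]addr0; apply: cvgD => //.
  apply/(@gtr0_cvgV0 R R (pinfty_nbhs R) _ (fun th => (n th)%:R)) => //.
  by near=> th; rewrite ltr0n.
Unshelve. all: end_near.
Qed.

End Asymptotics.

Section ChoiceOfTilt.
Variable R : realType.
Implicit Types (c e w x : R).

Lemma mean_fun_near0 c e : 0 < c -> 0 < e -> exists2 w, 0 < w <= c & mean_fun w < e.
Proof.
move=> c0 e0; set m := 1 + `|ln c| + 4 / e.
have e4 : 0 < 4 / e by rewrite divr_gt0.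
have := normr_ge0 (ln c) => lnc0.
have m0 : 0 < m by rewrite /m; lra.
exists (expR (- m)); first rewrite expR_gt0 /=.
  rewrite -[X in _ <= X](lnK (x := c)) ?posrE // ler_expR.
  by have := ler_norm (- ln c); rewrite normrN /m; lra.
apply: le_lt_trans (mean_fun_expRN_le m0) _.
by rewrite ltr_pdivrMr // mulrC -ltr_pdivrMr // /m; lra.
Qed.

Lemma mean_fun_near1 c e : 0 < c -> 0 < e -> exists2 w, c <= w & 1 - e < mean_fun w.
Proof.
move=> c0 e0; have eV0 : 0 < e^-1 by rewrite invr_gt0.
set w := c + e^-1; have w0 : 0 < w by rewrite addr_gt0.
exists w; first by rewrite lerDl ltW.
have /andP[lb _] := mean_fun_bounds w0; apply: lt_le_trans lb.
have -> : w / (w + 1) = 1 - (w + 1)^-1 by field; rewrite gt_eqF // addr_gt0.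
rewrite ltrD2l ltrN2 invf_plt ?posrE ?addr_gt0 //.
by rewrite /w addrAC addrC ltrDl addr_gt0.
Qed.

Lemma mean_fun_ivt x : 0 < x < 1 -> exists2 w, 0 < w & mean_fun w = x.
Proof.
move=> /andP[x0 x1]; set m := 1 + 4 / x.
have m0 : 0 < m by rewrite /m addr_gt0 ?divr_gt0.
set w1 := expR (- m); have w10 : 0 < w1 := expR_gt0 _.
have lo : mean_fun w1 <= x.
  apply: le_trans (mean_fun_expRN_le m0) _.
  by rewrite ler_pdivrMr // mulrC -ler_pdivrMr // /m; lra.
set w2 := x / (1 - x); have w20 : 0 < w2 by rewrite divr_gt0 // subr_gt0.
have hi : x <= mean_fun w2.
  have /andP[lb _] := mean_fun_bounds w20; apply: le_trans lb.
  rewrite le_eqVlt; apply/orP; left; apply/eqP; rewrite /w2.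
  by field; rewrite subr_eq0 gt_eqF //= addrC subrK oner_neq0.
have cont (a b : R) : 0 < a -> {within `[a, b], continuous (@mean_fun R)}.
  move=> a0; apply: continuous_in_subspaceT => y.
  rewrite inE /= in_itv /= => /andP[ay _]; apply: mean_fun_continuous.
  exact: lt_le_trans ay.
have ivt (a b : R) : 0 < a -> a <= b -> Num.min (mean_fun a) (mean_fun b) <= x
    <= Num.max (mean_fun a) (mean_fun b) -> exists2 w, 0 < w & mean_fun w = x.
  move=> a0 ab hx; have [w] := IVT ab (cont a b a0) hx.
  by rewrite in_itv /= => /andP[aw _] <-; exists w => //; exact: lt_le_trans aw.
have [w12|w21] := leP w1 w2.
  by apply: ivt w12 _ => //; rewrite ge_min le_max lo hi orbT.
by apply: ivt (ltW w21) _ => //; rewrite ge_min le_max lo hi orbT.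
Qed.

(* The sign condition makes [t x - Lambda3 c t] at least its value at the limiting
   tilted mean [mean_fun (c e^(t c))]. *)
Lemma choose_tilt c x e : 0 < c -> 0 <= x <= 1 -> 0 < e ->
  exists t, `|mean_fun (c * expR (t * c)) - x| < e
            /\ 0 <= t * (x - mean_fun (c * expR (t * c))).
Proof.
move=> c0 /andP[x0 x1] e0.
pose t_of w := ln (w / c) / c.
have t_ofK w : 0 < w -> c * expR (t_of w * c) = w.
  move=> w0; rewrite /t_of divfK ?gt_eqF // lnK ?posrE ?divr_gt0 //.
  by rewrite mulrC divfK ?gt_eqF.
have t_of_le0 w : 0 < w -> w <= c -> t_of w <= 0.
  move=> w0 wc; rewrite /t_of pmulr_lle0 ?invr_gt0 //.
  by apply: ln_le0; rewrite ler_pdivrMr // mul1r.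
have t_of_ge0 w : c <= w -> 0 <= t_of w.
  move=> cw; apply: divr_ge0 (ltW c0); apply: ln_ge0.
  by rewrite ler_pdivlMr // mul1r.
have [->|x_neq0] := eqVneq x 0.
  have [w /andP[w0 wc] small] := mean_fun_near0 c0 e0.
  exists (t_of w); rewrite t_ofK // subr0 sub0r gtr0_norm ?mean_fun_gt0 //.
  by split=> //; rewrite mulr_le0 ?t_of_le0 // oppr_le0 ltW ?mean_fun_gt0.
have [->|x_neq1] := eqVneq x 1.
  have [w cw big] := mean_fun_near1 c0 e0.
  have w0 : 0 < w := lt_le_trans c0 cw.
  have /andP[_ le1] := mean_fun_bounds w0.
  exists (t_of w); rewrite t_ofK // distrC ger0_norm ?subr_ge0 //.
  by split; [lra | rewrite mulr_ge0 ?t_of_ge0 ?subr_ge0].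
have [w w0 <-] : exists2 w, 0 < w & mean_fun w = x.
  by apply: mean_fun_ivt; rewrite !lt_def x_neq0 x0 eq_sym x_neq1 x1.
by exists (t_of w); rewrite t_ofK // subrr normr0 mulr0.
Qed.

End ChoiceOfTilt.

Section RateFunction.
Variables (R : realType) (c : R).

Lemma rate3_ge x t : ((t * x - Lambda3 c t)%:E <= rate3 c x)%E.
Proof. by apply: ereal_sup_ubound; exists t. Qed.

Lemma Lambda3_0 : Lambda3 c 0 = 0.
Proof. by rewrite /Lambda3 mulr0 expR0 mulr1; ring. Qed.

Lemma rate3_ge0 x : (0 <= rate3 c x)%E.
Proof. by apply: le_trans (rate3_ge x 0); rewrite Lambda3_0 mul0r subr0. Qed.

Lemma rate3_sublevel_closed (a : R) : closed [set x | unit01 x /\ (rate3 c x <= a%:E)%E].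
Proof.
have -> : [set x | unit01 x /\ (rate3 c x <= a%:E)%E] =
    @unit01 R `&` \bigcap_(t in [set: R]) [set x | t * x - Lambda3 c t <= a].
  apply/seteqP; split => x /= [x01 rate_le]; split => //.
    by move=> t _ /=; rewrite -lee_fin; exact: le_trans (rate3_ge x t) rate_le.
  by apply: ge_ereal_sup => _ [t _ <-]; rewrite lee_fin; exact: rate_le.
apply: closedI; first exact: itv_closed.
apply: closed_bigI => t _; apply: (continuous_closedP _).1 (@closed_le _ a).
by move=> x; apply: cvgB; [apply: cvgM; [exact: cvg_cst | exact: cvg_id] | exact: cvg_cst].
Qed.

End RateFunction.

Section ExtendedLimits.
Variable R : realType.
Local Open Scope ereal_scope.

Lemma limf_esup_pinfty_le (f : R -> \bar R) (b : R) :
  (forall eta : R, (0 < eta)%R -> \forall th \near pinfty_nbhs R, f th <= (b + eta)%:E) ->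
  limf_esup f (pinfty_nbhs R) <= b%:E.
Proof.
move=> ev_le; apply/lee_addgt0Pr => eta eta0.
rewrite limf_esupE; apply: le_trans (ereal_inf_lbound _) _.
  by exists [set th | f th <= (b + eta)%:E] => //; exact: ev_le.
by apply: ge_ereal_sup => _ [y fy <-].
Qed.

Lemma limf_einf_pinfty_ge (f : R -> \bar R) (b : R) :
  (forall eta : R, (0 < eta)%R -> \forall th \near pinfty_nbhs R, (b - eta)%:E <= f th) ->
  b%:E <= limf_einf f (pinfty_nbhs R).
Proof.
move=> ev_ge; rewrite -[limf_einf f _]oppeK -limf_esupN leeNr -EFinN.
apply: limf_esup_pinfty_le => eta /ev_ge; apply: filterS => th /=.
by rewrite leeNl -EFinN opprD opprK.
Qed.

Lemma leeN_real (X L : \bar R) : (forall a : R, a%:E < L -> X <= (- a)%:E) -> X <= - L.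
Proof.
case: L => [r| |] X_le; last by rewrite /= leey.
- apply/lee_addgt0Pr => e e0.
  have := X_le (r - e)%R; rewrite lte_fin ltrBlDr ltrDl e0 => /(_ isT).
  by rewrite -EFinN -EFinD opprB addrC.
- case: X X_le => [x| |] X_le //=.
  + by have := X_le (1 - x)%R (ltry _); rewrite lee_fin opprB => ?; exfalso; lra.
  + by have := X_le 0%R (ltry _).
Qed.

End ExtendedLimits.

Section KnLaw.
Variable R : realType.
Implicit Types (th s : R) (N : nat).

Definition Kn_weight th N k : R := stirling1 R N k * th ^+ k / rising th N.

Lemma Kn_weight_ge0 th N k : 0 < th -> 0 <= Kn_weight th N k.
Proof. by move=> th0; rewrite divr_ge0 ?stirling1_term_ge0 ?ltW ?rising_gt0. Qed.

Lemma Kn_law_E th N (A : set R) : (0 < N)%N ->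
  Kn_law th N A = \sum_(k < N.+1 | `[< A (k%:R / N%:R) >]) Kn_weight th N k.
Proof.
move=> N0; rewrite /Kn_law [RHS]big_mkcond /= -(big_mkord xpredT
  (fun k => if `[< A (k%:R / N%:R) >] then Kn_weight th N k else 0)) /=.
rewrite [RHS](big_ltn (m := 0)) //= /Kn_weight stirling1_n0 // !mul0r.
by case: ifP => _; rewrite add0r.
Qed.

Lemma Kn_law_ge0 th N (A : set R) : 0 < th -> (0 < N)%N -> 0 <= Kn_law th N A.
Proof. by move=> th0 N0; rewrite Kn_law_E //; apply: sumr_ge0 => k _; exact: Kn_weight_ge0. Qed.

Lemma Kn_weight_tilt th s N k :
  stirling1 R N k * (th * expR s) ^+ k / rising th N = Kn_weight th N k * expR (s * k%:R).
Proof. by rewrite /Kn_weight exprMn -expRM_natl (mulrC _ s); ring. Qed.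

Lemma Kn_weight_expR_sum th s N :
  \sum_(k < N.+1) Kn_weight th N k * expR (s * k%:R) = rising (th * expR s) N / rising th N.
Proof.
by rewrite -rising_stirling1 mulr_suml; apply: eq_bigr => k _; rewrite Kn_weight_tilt.
Qed.

End KnLaw.

Lemma rising_mass_near_mean (R : realType) N (a d : R) : (0 < N)%N -> 0 < a -> 0 < d <= 1 ->
  2 * expR (- (N%:R * d ^+ 2 / 8)) <= 1/2 ->
  rising a N / 2 <= \sum_(k < N.+1 | `|k%:R / N%:R - rising_mean a N / N%:R| < d)
                       stirling1 R N k * a ^+ k.
Proof.
move=> N0 a0 d01 tail_small.
have := rising_stirling1 N a.
rewrite (bigID (fun k : 'I_N.+1 => d <= `|k%:R / N%:R - rising_mean a N / N%:R|)) /=.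
under [X in _ + X = _]eq_bigl do rewrite -ltNge.
have := tail_bound N0 a0 d01.
have := ler_wpM2l (ltW (rising_gt0 N a0)) tail_small.
lra.
Qed.

Section FiniteBounds.
Variables (R : realType) (n : R -> nat).
Hypothesis n0 : forall theta, (0 < n theta)%N.

Lemma expR_scaled_cgf t th : 0 < th ->
  expR (th * scaled_cgf n t th) = rising (th * tilt n t th) (n th) / rising th (n th).
Proof.
move=> th0; rewrite /scaled_cgf mulrA divff ?gt_eqF // mul1r lnK // posrE.
by rewrite divr_gt0 ?rising_gt0 ?mulr_gt0 ?tilt_gt0.
Qed.

(* Chernoff's bound, taken with a different exponent on each piece of a cover of [A]. *)
Lemma Kn_law_le_cover th (A : set R) (s : seq R) (a : R) (L : R -> R) : 0 < th ->
  (forall y, A y -> exists2 t, t \in s & a + L t < t * y) ->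
  Kn_law th (n th) A <= \sum_(t <- s) expR (th * (scaled_cgf n t th - a - L t)).
Proof.
move=> th0 cover; set N := n th; have Np : 0 < (N%:R : R) by rewrite ltr0n n0.
pose f k t := Kn_weight th N k * expR (t * (th / N%:R) * k%:R - th * (a + L t)).
have f0 k t : 0 <= f k t by apply: mulr_ge0; [exact: Kn_weight_ge0 | exact: expR_ge0].
rewrite Kn_law_E ?n0 //; apply: le_trans (_ : \sum_(k < N.+1) \sum_(t <- s) f k t <= _).
  rewrite [X in _ <= X](bigID (fun k : 'I_N.+1 => `[< A (k%:R / N%:R) >])) /=.
  rewrite -[X in X <= _]addr0; apply: lerD; last by do 2![apply: sumr_ge0 => ? _].
  apply: ler_sum => k /asboolP /cover [t ts cov].
  rewrite (big_rem t ts) /= -[X in X <= _]addr0; apply: lerD; last exact: sumr_ge0.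
  rewrite /f -[X in X <= _]mulr1; apply: ler_wpM2l; first exact: Kn_weight_ge0.
  apply: le_trans (expR_ge1Dx _); rewrite lerDl subr_ge0.
  rewrite (_ : t * (th / N%:R) * k%:R = th * (t * (k%:R / N%:R))); last by ring.
  by apply: ler_wpM2l; rewrite ltW.
rewrite exchange_big /=; apply: ler_sum => t _.
rewrite /f; under eq_bigr do rewrite expRD mulrA.
rewrite -mulr_suml Kn_weight_expR_sum -[expR (t * (th / N%:R))]/(tilt n t th).
by rewrite -expR_scaled_cgf // -expRD le_eqVlt; apply/orP; left; apply/eqP; congr expR; ring.
Qed.

Lemma Kn_law_ge_tilted th (G : set R) t d : 0 < th -> 0 < d <= 1 ->
  (forall k : nat, (k <= n th)%N ->
     `|k%:R / (n th)%:R - tilted_mean n t th| < d -> G (k%:R / (n th)%:R)) ->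
  2 * expR (- ((n th)%:R * d ^+ 2 / 8)) <= 1/2 ->
  1/2 * expR (th * (scaled_cgf n t th - t * tilted_mean n t th - `|t| * d))
    <= Kn_law th (n th) G.
Proof.
move=> th0 d01 near_in_G tail_small; set N := n th; set Y := tilted_mean n t th.
have Np : 0 < (N%:R : R) by rewrite ltr0n n0.
set a := th * tilt n t th; have a0 : 0 < a by rewrite mulr_gt0 ?tilt_gt0.
pose close (k : 'I_N.+1) := `|k%:R / N%:R - Y| < d.
set C := expR (- (th * (t * Y + `|t| * d))) / rising th N.
have C0 : 0 <= C by rewrite divr_ge0 ?expR_ge0 ?ltW ?rising_gt0.
have weight_ge k : close k -> C * (stirling1 R N k * a ^+ k) <= Kn_weight th N k.
  move=> close_k; have tiltE := Kn_weight_tilt th (t * (th / N%:R)) N k.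
  rewrite (_ : C * _ = Kn_weight th N k *
      expR (t * (th / N%:R) * k%:R - th * (t * Y + `|t| * d))); last first.
    by rewrite expRD [RHS]mulrA -tiltE /C /a /tilt; ring.
  rewrite -[X in _ <= X]mulr1; apply: ler_wpM2l; first exact: Kn_weight_ge0.
  rewrite expR_le1 subr_le0 (_ : t * (th / N%:R) * k%:R = th * (t * (k%:R / N%:R))); last by ring.
  apply: ler_wpM2l; first exact: ltW.
  have : t * (k%:R / N%:R - Y) <= `|t| * d.
    by apply: le_trans (ler_norm _) _; rewrite normrM ler_wpM2l // ltW.
  lra.
rewrite Kn_law_E ?n0 //.
apply: le_trans (_ : \sum_(k < N.+1 | close k) Kn_weight th N k <= _); last first.
  rewrite [X in _ <= X](bigID close) /= -[X in X <= _]addr0; apply: lerD; last first.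
    by apply: sumr_ge0 => k _; exact: Kn_weight_ge0.
  rewrite le_eqVlt; apply/orP; left; apply/eqP; apply: eq_bigl => k.
  case close_k: (close k); rewrite ?andbF ?andbT //; apply/esym/asboolP.
  by apply: near_in_G => //; rewrite -ltnS ltn_ord.
apply: le_trans (_ : C * (rising a N / 2) <= _).
  rewrite le_eqVlt; apply/orP; left; apply/eqP.
  rewrite (_ : th * _ = th * scaled_cgf n t th + - (th * (t * Y + `|t| * d))); last by ring.
  by rewrite expRD expR_scaled_cgf // /C; field; rewrite gt_eqF ?rising_gt0.
apply: le_trans (ler_wpM2l C0 (rising_mass_near_mean (n0 th) a0 d01 tail_small)) _.
by rewrite mulr_sumr; apply: ler_sum => k; exact: weight_ge.
Qed.

End FiniteBounds.

Lemma closure_cover (R : realType) (c : R) (F : set R) (a : R) : F `<=` @unit01 R ->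
  (a%:E < ereal_inf (rate3 c @` closure F))%E ->
  exists s : seq R, forall y, closure F y ->
    exists2 t, t \in s & a + Lambda3 c t < t * y.
Proof.
move=> F01 a_lt.
have cl01 : closed (@unit01 R) by exact: itv_closed.
have clF01 : closure F `<=` @unit01 R.
  by have := closureS F01; rewrite -((closure_id _).1 cl01).
have : compact (closure F).
  exact: subclosed_compact (@closed_closure _ F) (@segment_compact R 0 1) clF01.
rewrite compact_cover => clF_compact.
pose U t := [set y | a + Lambda3 c t < t * y].
have U_open t : [set: R] t -> open (U t).
  move=> _; apply: (continuousP _).1 (@open_gt _ (a + Lambda3 c t)).
  by move=> y; apply: cvgM; [exact: cvg_cst | exact: cvg_id].
have clF_cover : closure F `<=` cover [set: R] U.
  move=> y clFy; have : (a%:E < rate3 c y)%E.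
    by apply: lt_le_trans a_lt _; apply: ereal_inf_lbound; exists y.
  move=> /ereal_sup_gt [_ [t _ <-]]; rewrite lte_fin => t_gt.
  by exists t => //; rewrite /U /=; lra.
have [D _ D_cover] := clF_compact R _ _ U_open clF_cover.
by exists (finmap.enum_fset D) => y /D_cover [t tD Uty]; exists t.
Qed.

Lemma near_all_in (T : Type) (F : set_system T) (FF : Filter F) (I : eqType) (s : seq I)
    (P : I -> T -> Prop) :
  (forall i, \forall x \near F, P i x) -> \forall x \near F, forall i, i \in s -> P i x.
Proof.
move=> ev; elim: s => [|i s IHs]; first by apply: nearW => x i.
have evi := ev i; near=> x => j; rewrite in_cons => /orP[/eqP -> | js].
  by near: x.
by move: j js; near: x.
Unshelve. all: end_near.
Qed.

Lemma scaled_log_le (R : realType) (th P m b : R) : 0 < th -> 0 <= P ->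
  P <= m * expR (th * b) -> (scaled_log th P <= (th^-1 * ln m + b)%:E)%E.
Proof.
move=> th0 P0 P_le; rewrite /scaled_log; case: eqP => [_|/eqP P_neq0]; first exact: leNye.
have {}P0 : 0 < P by rewrite lt_def P_neq0.
have m0 : 0 < m by move: (lt_le_trans P0 P_le); rewrite pmulr_lgt0 ?expR_gt0.
have ln_le : ln P <= ln m + th * b.
  by rewrite -[th * b]expRK -lnM ?posrE ?expR_gt0 // ler_ln ?posrE ?mulr_gt0 ?expR_gt0.
have thV0 : 0 <= th^-1 by rewrite invr_ge0 ltW.
have := ler_wpM2l thV0 ln_le.
by rewrite lee_fin mulrDr mulrA mulVf ?gt_eqF // mul1r.
Qed.

Lemma scaled_log_ge (R : realType) (th P z : R) : 0 < th ->
  1/2 * expR (th * z) <= P -> ((z - th^-1)%:E <= scaled_log th P)%E.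
Proof.
move=> th0 P_ge; have half0 : 0 < 1/2 * expR (th * z) by rewrite mulr_gt0 ?expR_gt0.
have P0 := lt_le_trans half0 P_ge.
rewrite /scaled_log gt_eqF // lee_fin.
have := P_ge; rewrite -ler_ln ?posrE // lnM ?posrE ?expR_gt0 // expRK => ln_ge.
have ln_half : - 1 <= ln (1 / 2 : R).
  rewrite mul1r lnV ?posrE // lerN2.
  by have := @le_ln1Dx R 1 (lt_trans (ltrN10 R) ltr01).
have thV0 : 0 <= th^-1 by rewrite invr_ge0 ltW.
have ln_ge' : - 1 + th * z <= ln P by lra.
have := ler_wpM2l thV0 ln_ge'.
by rewrite mulrDr mulrA mulVf ?gt_eqF // mul1r mulrN1 addrC.
Qed.

Section LargeDeviations.
Variables (R : realType) (c : R) (n : R -> nat).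
Hypothesis c0 : 0 < c.
Hypothesis n0 : forall theta, (0 < n theta)%N.
Hypothesis n_cvg : ((n theta)%:R : R) @[theta --> +oo] --> +oo.
Hypothesis ratio_cvg : theta / (n theta)%:R @[theta --> +oo] --> c.

Lemma LDP_upper (F : set R) : F `<=` @unit01 R ->
  (limf_esup (fun th => scaled_log th (Kn_law th (n th) F)) (pinfty_nbhs R)
     <= - ereal_inf (rate3 c @` closure F))%E.
Proof.
move=> F01; apply: leeN_real => a a_lt.
have [s cover] := closure_cover F01 a_lt.
apply: limf_esup_pinfty_le => eta eta0; have eta2 : 0 < eta / 2 by rewrite divr_gt0.
set m : R := (size s)%:R.
have cgf_near : \forall th \near pinfty_nbhs R,
    forall t, t \in s -> scaled_cgf n t th <= Lambda3 c t + eta / 2.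
  apply: near_all_in => t.
  have cgf_close := (cvgrPdist_lt _ _).1 (@scaled_cgf_cvg R c n c0 n0 ratio_cvg t) _ eta2.
  near=> th; have : `|Lambda3 c t - scaled_cgf n t th| < eta / 2.
    by near: th; exact: cgf_close.
  by rewrite ltr_norml => /andP[+ _]; lra.
have log_near : \forall th \near pinfty_nbhs R, th^-1 * ln m < eta / 2.
  have : th^-1 * ln m @[th --> +oo] --> 0.
    by rewrite -(mul0r (ln m)); apply: cvgM; [exact: invr_cvg0_pinfty | exact: cvg_cst].
  move=> /(cvgrPdist_lt _ _).1 /(_ _ eta2) log_close.
  near=> th; have : `|0 - th^-1 * ln m| < eta / 2.
    by near: th; exact: log_close.
  by rewrite sub0r normrN; apply: le_lt_trans; exact: ler_norm.
near=> th; have th0 : 0 < th by near: th; exact: nbhs_pinfty_gt.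
have cgf_th : forall t, t \in s -> scaled_cgf n t th <= Lambda3 c t + eta / 2.
  by near: th; exact: cgf_near.
have log_th : th^-1 * ln m < eta / 2 by near: th; exact: log_near.
have cover_bound : Kn_law th (n th) F <= m * expR (th * (eta / 2 - a)).
  apply: le_trans (Kn_law_le_cover n0 (L := Lambda3 c) th0 _) _.
    by move=> y Fy; apply: cover; exact: subset_closure.
  apply: le_trans (_ : \sum_(t <- s) expR (th * (eta / 2 - a)) <= _).
    rewrite big_seq_cond [X in _ <= X]big_seq_cond; apply: ler_sum => t /andP[ts _].
    rewrite ler_expR ler_pM2l //.
    by have := cgf_th t ts; lra.
  have count_all (r : seq R) : count xpredT r = size r by elim: r => //= x r ->.
  by rewrite big_const_seq iter_addr_0 count_all -[_ *+ size s]mulr_natl.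
apply: le_trans (scaled_log_le th0 (Kn_law_ge0 F th0 (n0 th)) cover_bound) _.
by rewrite lee_fin; lra.
Unshelve. all: end_near.
Qed.

Lemma tail_small_near (d : R) : 0 < d ->
  \forall th \near pinfty_nbhs R, 2 * expR (- ((n th)%:R * d ^+ 2 / 8)) <= 1/2.
Proof.
move=> d0; have d2 : 0 < d ^+ 2 by rewrite exprn_gt0.
apply: filterS ((cvgryPge _).1 n_cvg (24 / d ^+ 2)) => th.
rewrite ler_pdivrMr // => n_large; set y := (n th)%:R * d ^+ 2 / 8.
have y3 : 3 <= y by rewrite /y; lra.
have := expR_ge1Dx y; have := expRxMexpNx_1 y; have := expR_gt0 (- y).
nra.
Qed.

Lemma small_step (t e eta : R) : 0 < e -> 0 < eta ->
  exists d, [/\ 0 < d <= 1, d <= e / 4 & `|t| * d <= eta / 4].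
Proof.
move=> e0 eta0; set K := `|t| + 1; have K0 : 0 < K by rewrite /K ltr_pwDr ?normr_ge0.
exists (Num.min (Num.min 1 (e / 4)) (eta / (4 * K))); split.
- by rewrite !lt_min ltr01 !divr_gt0 ?mulr_gt0 //= !ge_min lexx.
- by rewrite !ge_min lexx orbT.
- have tK : `|t| <= K by rewrite /K lerDl.
  have dK : Num.min (Num.min 1 (e / 4)) (eta / (4 * K)) <= eta / (4 * K).
    by rewrite ge_min lexx orbT.
  apply: le_trans (ler_pM (normr_ge0 t) _ tK dK) _.
    by rewrite ltW // !lt_min ltr01 !divr_gt0 ?mulr_gt0.
  by rewrite le_eqVlt; apply/orP; left; apply/eqP; field; rewrite gt_eqF.
Qed.

Lemma grid_in_ball (G : set R) x e Y Y' d N k : (0 < N)%N ->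
  (forall y, @unit01 R y -> `|y - x| < e -> G y) -> `|Y - x| < e / 2 ->
  `|Y - Y'| < d -> d <= e / 4 ->
  (k <= N)%N -> `|k%:R / N%:R - Y'| < d -> G (k%:R / N%:R).
Proof.
move=> N0 ball_in_G Yx YY' de kN kY'; have Np : 0 < (N%:R : R) by rewrite ltr0n.
apply: ball_in_G.
  rewrite /unit01 /= in_itv /=; apply/andP; split; first by rewrite divr_ge0 // ltW.
  by rewrite ler_pdivrMr // mul1r ler_nat.
have := ler_distD Y' (k%:R / N%:R) x; have := ler_distD Y Y' x.
rewrite distrC in YY'; lra.
Qed.

Lemma LDP_lower_point (G : set R) x e t eta : 0 < e -> 0 < eta ->
  (forall y, @unit01 R y -> `|y - x| < e -> G y) ->
  `|mean_fun (c * expR (t * c)) - x| < e / 2 ->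
  0 <= t * (x - mean_fun (c * expR (t * c))) ->
  \forall th \near pinfty_nbhs R,
    ((Lambda3 c t - t * x - eta)%:E <= scaled_log th (Kn_law th (n th) G))%E.
Proof.
move=> e0 eta0 ball_in_G mean_close tilt_sign; set Y := mean_fun (c * expR (t * c)).
have eta4 : 0 < eta / 4 by rewrite divr_gt0.
have [d [d01 de td]] := small_step t e0 eta0; have /andP[d0 _] := d01.
have := (cvgrPdist_lt _ _).1 (@tilted_mean_cvg R c n c0 n0 n_cvg ratio_cvg t) _ d0.
have := (cvgrPdist_lt _ _).1 (@scaled_cgf_cvg R c n c0 n0 ratio_cvg t) _ eta4.
have := (cvgrPdist_lt _ _).1 (@invr_cvg0_pinfty R) _ eta4.
move=> inv_near cgf_near mean_near; near=> th.
have th0 : 0 < th by near: th; exact: nbhs_pinfty_gt.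
have thV : `|0 - th^-1| < eta / 4 by near: th; exact: inv_near.
rewrite sub0r normrN gtr0_norm ?invr_gt0 // in thV.
have cgf_th : `|Lambda3 c t - scaled_cgf n t th| < eta / 4 by near: th; exact: cgf_near.
have Y_th : `|Y - tilted_mean n t th| < d by near: th; exact: mean_near.
have tail_th : 2 * expR (- ((n th)%:R * d ^+ 2 / 8)) <= 1/2.
  by near: th; exact: tail_small_near.
have close_in_G k : (k <= n th)%N -> `|k%:R / (n th)%:R - tilted_mean n t th| < d ->
    G (k%:R / (n th)%:R).
  exact: (grid_in_ball (n0 th) ball_in_G mean_close Y_th de).
have P_ge := Kn_law_ge_tilted n0 th0 d01 close_in_G tail_th.
apply: le_trans (scaled_log_ge th0 P_ge); rewrite lee_fin.
have tY_th : t * tilted_mean n t th <= t * Y + `|t| * d.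
  have : t * (tilted_mean n t th - Y) <= `|t| * d.
    by apply: le_trans (ler_norm _) _; rewrite normrM ler_wpM2l // distrC ltW.
  lra.
have tYx : t * Y <= t * x by rewrite -subr_ge0 -mulrBr.
by move: cgf_th; rewrite ltr_norml => /andP[_]; lra.
Unshelve. all: end_near.
Qed.

Lemma LDP_lower (G : set R) : G `<=` @unit01 R ->
  (- ereal_inf (rate3 c @` rel_interior01 G)
     <= limf_einf (fun th => scaled_log th (Kn_law th (n th) G)) (pinfty_nbhs R))%E.
Proof.
move=> G01; rewrite leeNl; apply: le_ereal_inf_tmp => _ [x [Gx [e e0 ball_in_G]] <-].
have x01 : 0 <= x <= 1 by have := G01 x Gx; rewrite /unit01 /= in_itv.
rewrite leeNl; case rate_x : (rate3 c x) => [r| |]; last first.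
- by have := rate3_ge0 c x; rewrite rate_x.
- by rewrite leNye.
rewrite -EFinN; apply: limf_einf_pinfty_ge => eta eta0.
have e2 : 0 < e / 2 by rewrite divr_gt0.
have [t [mean_close tilt_sign]] := choose_tilt c0 x01 e2.
have rate_ge : t * x - Lambda3 c t <= r by have := rate3_ge c x t; rewrite rate_x lee_fin.
apply: filterS (LDP_lower_point e0 eta0 ball_in_G mean_close tilt_sign) => th.
by apply: le_trans; rewrite lee_fin; lra.
Qed.

End LargeDeviations.

Unset Implicit Arguments.

Theorem theorem4p4 (R : realType) (c : R) (n : R -> nat) :
  0 < c ->
  (forall theta, (0 < n theta)%N) ->
  (((n theta)%:R : R) @[theta --> +oo] --> +oo) ->
  (theta / (n theta)%:R @[theta --> +oo] --> (c : R)) ->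
  LDP01 (fun theta A => Kn_law theta (n theta) A) (rate3 c).
Proof.
move=> c0 n0 n_cvg ratio_cvg; split.
- by move=> x _; exact: rate3_ge0.
- exact: rate3_sublevel_closed.
- by move=> F _ F01; exact: LDP_upper.
- by move=> G _ G01; exact: LDP_lower.
Qed.
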